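(* Let $\mathbb{F}$ be an algebraically closed field of characteristic zero and $J_1=E_{12}$. Let $\underline{A}=(J_1,A_2,A_3)$ and $\underline{B}=(0,B_2,B_3)$ be elements of $\mathcal{N}_3^3$ such that $f(\underline{A})=f(\underline{B})$ for all $f\in S_{3,3}$. Then $f(\underline{A})=f(\underline{B})$ for all $f\in P_{3,3}$.
   Context: $E_{ij}$ is the $3\times3$ matrix unit. $\mathcal{N}_3^3$ is the set of triples of nilpotent $3\times3$ matrices over $\mathbb{F}$. $\mathrm{tr}(Y_{i_1}\cdots Y_{i_r})$ denotes the function $\underline{A}\mapsto\mathrm{tr}(A_{i_1}\cdots A_{i_r})$. $S_{3,3}$ is the set consisting of: $\mathrm{tr}(Y_iY_j),\ \mathrm{tr}(Y_i^2Y_j),\ \mathrm{tr}(Y_iY_j^2),\ \mathrm{tr}(Y_i^2Y_j^2),\ \mathrm{tr}(Y_i^2Y_j^2Y_iY_j)$ for $1\le i<j\le3$; $\mathrm{tr}(Y_1Y_2Y_3)$, $\mathrm{tr}(Y_1Y_3Y_2)$; $\mathrm{tr}(Y_i^2Y_jY_k)$ for $\{i,j,k\}=\{1,2,3\}$; $\mathrm{tr}(Y_1^2Y_2Y_1Y_3)$, $\mathrm{tr}(Y_2^2Y_1Y_2Y_3)$, $\mathrm{tr}(Y_3^2Y_1Y_3Y_2)$. $P_{3,3}=S_{3,3}\sqcup P'_{3,3}$, where $P'_{3,3}$ consists of $\mathrm{tr}(Y_i^2Y_j^2Y_k)$ and $\mathrm{tr}(Y_i^2Y_j^2Y_iY_k)$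 for $\{i,j,k\}=\{1,2,3\}$, and $\mathrm{tr}(Y_1^2Y_2^2Y_3^2)$. *)

From HB Require Import structures.
From mathcomp Require Import all_boot all_order all_algebra.
Set Implicit Arguments. Unset Strict Implicit. Unset Printing Implicit Defensive.
Import GRing.Theory.
Local Open Scope ring_scope.

Definition is_nilpotent (F : fieldType) (A : 'M[F]_3) : Prop :=
  exists k : nat, A ^+ k = 0.

Definition in_N33 (F : fieldType) (A1 A2 A3 : 'M[F]_3) : Prop :=
  [/\ is_nilpotent A1, is_nilpotent A2 & is_nilpotent A3].

(* E_{12}: 1 in row 1, column 2 (0-based: row 0, column 1). *)
Definition J1 (F : fieldType) : 'M[F]_3 := delta_mx (0 : 'I_3) (1 : 'I_3).

(* Words are sequences of indices in {1,2,3}; the word [:: i1; ...; ir]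
   stands for the trace function tr(Y_{i1} ... Y_{ir}). *)
Definition Ysel (F : fieldType) (A1 A2 A3 : 'M[F]_3) (i : nat) : 'M[F]_3 :=
  match i with 1%N => A1 | 2%N => A2 | _ => A3 end.

Definition trw (F : fieldType) (A1 A2 A3 : 'M[F]_3) (w : seq nat) : F :=
  \tr (\prod_(i <- w) Ysel A1 A2 A3 i).

Definition S33 : seq (seq nat) :=
  [:: (* tr(Y_iY_j), tr(Y_i^2Y_j), tr(Y_iY_j^2), tr(Y_i^2Y_j^2), tr(Y_i^2Y_j^2Y_iY_j), i<j *)
      [:: 1; 2]%N; [:: 1; 1; 2]%N; [:: 1; 2; 2]%N; [:: 1; 1; 2; 2]%N; [:: 1; 1; 2; 2; 1; 2]%N;
      [:: 1; 3]%N; [:: 1; 1; 3]%N; [:: 1; 3; 3]%N; [:: 1; 1; 3; 3]%N; [:: 1; 1; 3; 3; 1; 3]%N;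
      [:: 2; 3]%N; [:: 2; 2; 3]%N; [:: 2; 3; 3]%N; [:: 2; 2; 3; 3]%N; [:: 2; 2; 3; 3; 2; 3]%N;
      [:: 1; 2; 3]%N; [:: 1; 3; 2]%N;
      (* tr(Y_i^2Y_jY_k), {i,j,k} = {1,2,3} *)
      [:: 1; 1; 2; 3]%N; [:: 1; 1; 3; 2]%N; [:: 2; 2; 1; 3]%N;
      [:: 2; 2; 3; 1]%N; [:: 3; 3; 1; 2]%N; [:: 3; 3; 2; 1]%N;
      [:: 1; 1; 2; 1; 3]%N; [:: 2; 2; 1; 2; 3]%N; [:: 3; 3; 1; 3; 2]%N ].

Definition P'33 : seq (seq nat) :=
  [:: (* tr(Y_i^2Y_j^2Y_k), {i,j,k} = {1,2,3} *)
      [:: 1; 1; 2; 2; 3]%N; [:: 1; 1; 3; 3; 2]%N; [:: 2; 2; 1; 1; 3]%N;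
      [:: 2; 2; 3; 3; 1]%N; [:: 3; 3; 1; 1; 2]%N; [:: 3; 3; 2; 2; 1]%N;
      (* tr(Y_i^2Y_j^2Y_iY_k), {i,j,k} = {1,2,3} *)
      [:: 1; 1; 2; 2; 1; 3]%N; [:: 1; 1; 3; 3; 1; 2]%N; [:: 2; 2; 1; 1; 2; 3]%N;
      [:: 2; 2; 3; 3; 2; 1]%N; [:: 3; 3; 1; 1; 3; 2]%N; [:: 3; 3; 2; 2; 3; 1]%N;
      [:: 1; 1; 2; 2; 3; 3]%N ].

Definition P33 : seq (seq nat) := S33 ++ P'33.

(* Every word of P'_{3,3} contains Y_1, so on B = (0, B_2, B_3) all of them
   vanish, and it suffices to show they vanish on A as well.  Since
   tr(J_1 X) = X_{21}, the S_{3,3} identities for tr(Y_1Y_j) and tr(Y_1Y_jY_k)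
   give (A_j)_{21} = 0 and (A_j)_{23} (A_k)_{31} = 0 for j, k in {2, 3}.  Hence
   either both (A_j)_{23} vanish, and J_1, A_2, A_3 all stabilise span(e_1, e_3),
   or both (A_j)_{31} vanish, and they all stabilise span(e_1).  In either case
   every product X of the letters has X_{21} = 0, so by cyclicity
   tr(U J_1 V) = (V U)_{21} = 0 for every word containing Y_1. *)

From HB Require Import structures.
From mathcomp Require Import all_boot all_order all_algebra.
Import GRing.Theory.
Set Implicit Arguments.
Unset Strict Implicit.
Unset Printing Implicit Defensive.
Local Open Scope ring_scope.

(* Indices are 0-based: [X i1 i0] is the entry X_{21} above. *)
Definition i0 : 'I_3 := @Ordinal 3 0 isT.
Definition i1 : 'I_3 := @Ordinal 3 1 isT.
Definition i2 : 'I_3 := @Ordinal 3 2 isT.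

Section Matrix3.

Variable F : fieldType.
Implicit Types M N X : 'M[F]_3.

Lemma mulmx3E M N i j :
  (M * N) i j = M i i0 * N i0 j + M i i1 * N i1 j + M i i2 * N i2 j.
Proof.
rewrite [LHS]mxE !big_ord_recl big_ord0 addr0 addrA.
by congr (_ * _ + _ * _ + _ * _); congr (_ _ _); apply: val_inj.
Qed.

Lemma mxtrace3E M : \tr M = M i0 i0 + M i1 i1 + M i2 i2.
Proof.
rewrite /mxtrace !big_ord_recl big_ord0 addr0 addrA.
by congr (_ + _ + _); congr (M _ _); apply: val_inj.
Qed.

Lemma J1E i j : J1 F i j = ((i == 0 :> nat) && (j == 1 :> nat))%:R.
Proof. by rewrite mxE. Qed.

Lemma mxtrace_J1_mul X : \tr (J1 F * X) = X i1 i0.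
Proof. by rewrite mxtrace3E !mulmx3E !J1E /=; rewrite !(mul0r, mul1r, add0r, addr0). Qed.

Lemma mulmx3_entry10 M N : M i1 i0 = 0 -> N i1 i0 = 0 ->
  (M * N) i1 i0 = M i1 i2 * N i2 i0.
Proof. by move=> M10 N10; rewrite mulmx3E M10 N10 !(mul0r, mulr0, add0r). Qed.

(* The stabilisers of span(e_1) and of span(e_1, e_3), hence subalgebras. *)
Definition col0_offdiag0_pred M := (M i1 i0 == 0) && (M i2 i0 == 0).
Arguments col0_offdiag0_pred _ /.
Definition col0_offdiag0 := [qualify M | col0_offdiag0_pred M].

Lemma col0_offdiag0E M : (M \is col0_offdiag0) = (M i1 i0 == 0) && (M i2 i0 == 0).
Proof. by []. Qed.

Definition row1_offdiag0_pred M := (M i1 i0 == 0) && (M i1 i2 == 0).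
Arguments row1_offdiag0_pred _ /.
Definition row1_offdiag0 := [qualify M | row1_offdiag0_pred M].

Lemma row1_offdiag0E M : (M \is row1_offdiag0) = (M i1 i0 == 0) && (M i1 i2 == 0).
Proof. by []. Qed.

Fact col0_offdiag0_mulr_closed : mulr_closed col0_offdiag0.
Proof.
split=> [|M N]; first by rewrite col0_offdiag0E !mxE /= eqxx.
rewrite !col0_offdiag0E => /andP[/eqP M10 /eqP M20] /andP[/eqP N10 /eqP N20].
by rewrite !mulmx3E M10 M20 N10 N20 !(mul0r, mulr0, add0r, addr0) eqxx.
Qed.
HB.instance Definition _ :=
  GRing.isMulClosed.Build 'M[F]_3 col0_offdiag0_pred col0_offdiag0_mulr_closed.

Fact row1_offdiag0_mulr_closed : mulr_closed row1_offdiag0.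
Proof.
split=> [|M N]; first by rewrite row1_offdiag0E !mxE /= eqxx.
rewrite !row1_offdiag0E => /andP[/eqP M10 /eqP M12] /andP[/eqP N10 /eqP N12].
by rewrite !mulmx3E M10 M12 N10 N12 !(mul0r, mulr0, add0r, addr0) eqxx.
Qed.
HB.instance Definition _ :=
  GRing.isMulClosed.Build 'M[F]_3 row1_offdiag0_pred row1_offdiag0_mulr_closed.

Lemma J1_col0_offdiag0 : J1 F \is col0_offdiag0.
Proof. by rewrite col0_offdiag0E !J1E /= eqxx. Qed.

Lemma J1_row1_offdiag0 : J1 F \is row1_offdiag0.
Proof. by rewrite row1_offdiag0E !J1E /= eqxx. Qed.

Lemma col0_offdiag0_entry10 : {in col0_offdiag0, forall M, M i1 i0 = 0}.
Proof. by move=> M; rewrite col0_offdiag0E => /andP[/eqP]. Qed.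

Lemma row1_offdiag0_entry10 : {in row1_offdiag0, forall M, M i1 i0 = 0}.
Proof. by move=> M; rewrite row1_offdiag0E => /andP[/eqP]. Qed.

End Matrix3.

Arguments col0_offdiag0 {F}.
Arguments row1_offdiag0 {F}.

Section Words.

Variable F : fieldType.

Lemma trw_J1_cons (A2 A3 : 'M[F]_3) w :
  trw (J1 F) A2 A3 (1%N :: w) = (\prod_(i <- w) Ysel (J1 F) A2 A3 i) i1 i0.
Proof. by rewrite /trw big_cons /= mxtrace_J1_mul. Qed.

Lemma trw0_eq0 (B2 B3 : 'M[F]_3) w : 1%N \in w -> trw 0 B2 B3 w = 0.
Proof. by case/splitPr=> u v; rewrite /trw big_cat big_cons /= mul0r mulr0 mxtrace0. Qed.

Lemma trw_J1_eq0 (S : mulrClosed 'M[F]_3) (A2 A3 : 'M[F]_3) w :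
  J1 F \in S -> A2 \in S -> A3 \in S -> {in S, forall M : 'M_3, M i1 i0 = 0} ->
  1%N \in w -> trw (J1 F) A2 A3 w = 0.
Proof.
move=> SJ1 SA2 SA3 S10 /splitPr[u v].
have Sprod s : \prod_(i <- s) Ysel (J1 F) A2 A3 i \in S.
  by apply: rpred_prod => -[|[|[|i]]].
by rewrite /trw big_cat big_cons /= mxtrace_mulC -mulmxA mxtrace_J1_mul S10 ?rpredM.
Qed.

End Words.

Lemma outer_prod2_eq0 (R : idomainType) (a2 a3 b2 b3 : R) :
  a2 * b2 = 0 -> a2 * b3 = 0 -> a3 * b2 = 0 -> a3 * b3 = 0 ->
  (a2 = 0 /\ a3 = 0) \/ (b2 = 0 /\ b3 = 0).
Proof.
move=> a2b2 a2b3 a3b2 a3b3.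
have factor_eq0 (a b : R) : a != 0 -> a * b = 0 -> b = 0.
  by move=> /negbTE nz_a /eqP; rewrite mulf_eq0 nz_a => /eqP.
have [a2_0|/factor_eq0 b_0] := eqVneq a2 0; last by right; split; apply: b_0.
have [a3_0|/factor_eq0 b_0] := eqVneq a3 0; first by left.
by right; split; apply: b_0.
Qed.

Lemma P'33_has1 : {in P'33, forall w, 1%N \in w}.
Proof. by apply/allP. Qed.

Lemma S33_letters_stable (F : fieldType) (A2 A3 B2 B3 : 'M[F]_3) :
  (forall w, w \in S33 -> trw (J1 F) A2 A3 w = trw 0 B2 B3 w) ->
  (A2 \is row1_offdiag0 /\ A3 \is row1_offdiag0) \/
  (A2 \is col0_offdiag0 /\ A3 \is col0_offdiag0).
Proof.
move=> eqS.
have eqS1 v : (1%N :: v) \in S33 -> (\prod_(i <- v) Ysel (J1 F) A2 A3 i) i1 i0 = 0.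
  by move=> v_in; rewrite -trw_J1_cons eqS // trw0_eq0 // mem_head.
have [A2_10 A3_10] := (eqS1 [:: 2%N] isT, eqS1 [:: 3%N] isT).
rewrite !big_seq1 /= in A2_10 A3_10.
have prod_eq0 j k : [:: 1%N; j; k] \in S33 ->
    (Ysel (J1 F) A2 A3 j * Ysel (J1 F) A2 A3 k) i1 i0 = 0.
  by move=> jk_in; rewrite -(eqS1 _ jk_in) !big_cons big_nil mulr1.
have [a2b2 a2b3] := (prod_eq0 2%N 2%N isT, prod_eq0 2%N 3%N isT).
have [a3b2 a3b3] := (prod_eq0 3%N 2%N isT, prod_eq0 3%N 3%N isT).
rewrite /= !mulmx3_entry10 // in a2b2 a2b3 a3b2 a3b3.
rewrite !row1_offdiag0E !col0_offdiag0E A2_10 A3_10.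
have [[-> ->]|[-> ->]] := outer_prod2_eq0 a2b2 a2b3 a3b2 a3b3.
- by left; rewrite eqxx.
- by right; rewrite eqxx.
Qed.

Theorem lemma8p1 (F : closedFieldType) (charF0 : [pchar F] =i pred0)
    (A2 A3 B2 B3 : 'M[F]_3) :
  in_N33 (J1 F) A2 A3 -> in_N33 0 B2 B3 ->
  (forall w, w \in S33 -> trw (J1 F) A2 A3 w = trw 0 B2 B3 w) ->
  forall w, w \in P33 -> trw (J1 F) A2 A3 w = trw 0 B2 B3 w.
Proof.
move=> _ _ eqS w; rewrite mem_cat => /orP[/eqS //|/P'33_has1 w1].
rewrite trw0_eq0 //.
have [[A2S A3S]|[A2S A3S]] := S33_letters_stable eqS.
- exact: trw_J1_eq0 (J1_row1_offdiag0 F) A2S A3S (@row1_offdiag0_entry10 F) w1.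
- exact: trw_J1_eq0 (J1_col0_offdiag0 F) A2S A3S (@col0_offdiag0_entry10 F) w1.
Qed.
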